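(* For a countable $L$-structure $\mathbb X$ the following are equivalent: (a) $\mathbb X$ is weakly reversible; (b) for every countable $L$-structure $\mathbb Y$, $\mathbb X\equiv_{\mathcal P_{\infty\omega}}\mathbb Y$ implies $\mathbb Y\cong\mathbb X$; (c) the theory $\mathrm{Th}_{\mathcal P_{\infty\omega}\cup\mathcal N_{\infty\omega}}(\mathbb X)$ of all sentences of $\mathcal P_{\infty\omega}\cup\mathcal N_{\infty\omega}$ true in $\mathbb X$ is $\omega$-categorical, i.e. every countable $L$-structure satisfying all these sentences is isomorphic to $\mathbb X$.
   Context: $L=\langle R_i:i\in I\rangle$ is a relational language, $R_i$ of arity $n_i$. A condensation from $\mathbb X$ onto $\mathbb Y$ is a bijection $F:X\to Y$ such that for all $i\in I$ and $\bar x\in X^{n_i}$, $\bar x\in R_i^{\mathbb X}$ implies $F\bar x\in R_i^{\mathbb Y}$ (where $F\bar x$ is coordinatewise). $\mathbb X\sim_c\mathbb Y$ means there are condensations from $\mathbb X$ onto $\mathbb Y$ and from $\mathbb Y$ onto $\mathbb X$. $\mathbb X$ is weakly reversible iff for every $L$-structure $\mathbb Y$, $\mathbb Y\sim_c\mathbb X$ implies $\mathbb Y\cong\mathbb X$. Formula classes: $\mathcal P_0$ consists of all atomic formulas ($v_\alpha=v_\beta$, $R_i(v_{\alpha_1},\dots,v_{\alpha_{n_i}})$) and all $\neg\,v_\alpha=v_\beta$. $\mathcal N_0$ consists of all $\neg R_i(v_{\alpha_1},\dots,v_{\alpha_{n_i}})$, all $v_\alpha=v_\beta$ and all $\neg\,v_\alpha=v_\beta$.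 $\mathcal P_{\infty\omega}$ (resp. $\mathcal N_{\infty\omega}$) is the closure of $\mathcal P_0$ (resp. $\mathcal N_0$) under $\forall v$, $\exists v$ and conjunctions and disjunctions of arbitrary sets of formulas (no negation). For a class $\mathcal F$ of formulas, $\mathbb X\equiv_{\mathcal F}\mathbb Y$ means $\mathbb X$ and $\mathbb Y$ satisfy the same sentences of $\mathcal F$. *)

From mathcomp Require Import all_boot.
Set Implicit Arguments. Unset Strict Implicit. Unset Printing Implicit Defensive.

Section Lang.
Variables (I : Type) (ar : I -> nat).

Record structure := Structure {
  carrier :> Type;
  rel : forall i : I, ('I_(ar i) -> carrier) -> Prop }.
Arguments rel : clear implicits.

Definition bijective_map (X Y : Type) (F : X -> Y) :=
  exists G : Y -> X, (forall x, G (F x) = x) /\ (forall y, F (G y) = y).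

Definition condensation (X Y : structure) (F : X -> Y) :=
  bijective_map F /\
  forall i (xs : 'I_(ar i) -> X), rel X i xs -> rel Y i (fun k => F (xs k)).

Definition isomorphism (X Y : structure) (F : X -> Y) :=
  bijective_map F /\
  forall i (xs : 'I_(ar i) -> X), rel X i xs <-> rel Y i (fun k => F (xs k)).

Definition isomorphic (X Y : structure) := exists F : X -> Y, isomorphism F.

Definition cond_equiv (X Y : structure) :=
  (exists F : X -> Y, condensation F) /\ (exists G : Y -> X, condensation G).

Definition weakly_reversible (X : structure) :=
  forall Y : structure, cond_equiv Y X -> isomorphic Y X.

(* countable = at most countable *)
Definition countable (X : structure) :=
  exists f : X -> nat, forall x y, f x = f y -> x = y.

(* Infinitary formulas in negation normal form over variables v_n (n : nat):
   atoms, negated atoms, conjunctions/disjunctions of arbitrary families,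
   quantifiers. *)
Inductive form : Type :=
| FEq   : nat -> nat -> form
| FNeq  : nat -> nat -> form
| FRel  : forall i : I, ('I_(ar i) -> nat) -> form
| FNRel : forall i : I, ('I_(ar i) -> nat) -> form
| FConj : forall J : Type, (J -> form) -> form
| FDisj : forall J : Type, (J -> form) -> form
| FAll  : nat -> form -> form
| FEx   : nat -> form -> form.

Fixpoint isP (f : form) : Prop :=
  match f with
  | FEq _ _ | FNeq _ _ | FRel _ _ => True
  | FNRel _ _ => False
  | FConj _ g | FDisj _ g => forall j, isP (g j)
  | FAll _ g | FEx _ g => isP g
  end.

Fixpoint isN (f : form) : Prop :=
  match f with
  | FEq _ _ | FNeq _ _ | FNRel _ _ => True
  | FRel _ _ => False
  | FConj _ g | FDisj _ g => forall j, isN (g j)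
  | FAll _ g | FEx _ g => isN g
  end.

Fixpoint closed_in (bound : nat -> Prop) (f : form) : Prop :=
  match f with
  | FEq a b | FNeq a b => bound a /\ bound b
  | FRel _ v | FNRel _ v => forall k, bound (v k)
  | FConj _ g | FDisj _ g => forall j, closed_in bound (g j)
  | FAll n g | FEx n g => closed_in (fun m => m = n \/ bound m) g
  end.

Definition sentence (f : form) := closed_in (fun _ => False) f.

Definition upd (X : Type) (e : nat -> option X) (n : nat) (x : X) :=
  fun m => if Nat.eqb m n then Some x else e m.

(* Satisfaction under a partial assignment (partial so that empty
   structures are handled correctly; for sentences no unbound variable
   is ever looked up). *)
Fixpoint sat (M : structure) (e : nat -> option M) (f : form) : Prop :=
  match f with
  | FEq a b => exists x y, e a = Some x /\ e b = Some y /\ x = y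
  | FNeq a b => exists x y, e a = Some x /\ e b = Some y /\ x <> y
  | FRel i v => exists xs : 'I_(ar i) -> M,
      (forall k, e (v k) = Some (xs k)) /\ rel M i xs
  | FNRel i v => exists xs : 'I_(ar i) -> M,
      (forall k, e (v k) = Some (xs k)) /\ ~ rel M i xs
  | FConj _ g => forall j, sat e (g j)
  | FDisj _ g => exists j, sat e (g j)
  | FAll n g => forall x : M, sat (upd e n x) g
  | FEx n g => exists x : M, sat (upd e n x) g
  end.

Definition models (M : structure) (f : form) := sat (fun _ => None : option M) f.

Definition P_equiv (X Y : structure) :=
  forall f, sentence f -> isP f -> (models X f <-> models Y f).

Definition models_PN_theory_of (X Y : structure) :=
  forall f, sentence f -> (isP f \/ isN f) -> models X f -> models Y f.

End Lang.
Arguments rel {I ar} s i xs.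

(* A condensation preserves every P-formula, and (since it is a bijection)
   reflects every N-formula: N-formulas are the duals of P-formulas, evaluated
   in the complement structure, and the inverse of a condensation X -> Y is a
   condensation of the complement of Y onto the complement of X.  Conversely,
   if every P-sentence true in a countable X holds in a countable Y, a
   back-and-forth construction (alternately going forth along an enumeration
   of X and back along one of Y, keeping the P-type of the finite tuples
   built so far included) produces a bijection X -> Y that maps relations to
   relations.  Hence for countable structures P-equivalence is the same as
   condensation equivalence, and a countable model of Th_{P u N}(X) is
   P-equivalent to X. *)

From Pilot Require Import Defs.
From Stdlib Require Import Classical ClassicalEpsilon FunctionalExtensionality PeanoNat.
From mathcomp Require Import all_boot.

Set Implicit Arguments. Unset Strict Implicit. Unset Printing Implicit Defensive.

Section WeakReversibility.
Variables (I : Type) (ar : I -> nat).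
Implicit Types (M N X Y : structure ar) (f : form ar).

Definition P_theory_le X Y :=
  forall f, sentence f -> isP f -> models X f -> models Y f.

Definition N_theory_le X Y :=
  forall f, sentence f -> isN f -> models X f -> models Y f.

Lemma closed_in_monotone f (B B' : nat -> Prop) :
  (forall m, B m -> B' m) -> closed_in B f -> closed_in B' f.
Proof.
elim: f B B' => [a b|a b|i v|i v|J g IH|J g IH|n g IH|n g IH] B B' BB' /=.
- by case=> ? ?; split; apply: BB'.
- by case=> ? ?; split; apply: BB'.
- by move=> Bv k; apply: BB'.
- by move=> Bv k; apply: BB'.
- by move=> Bg j; apply: IH (Bg j).
- by move=> Bg j; apply: IH (Bg j).
- by apply: IH => m [->|/BB']; [left|right].
- by apply: IH => m [->|/BB']; [left|right].
Qed.

Lemma sat_agree M f (B : nat -> Prop) (e e' : nat -> option M) :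
  (forall m, B m -> e m = e' m) -> closed_in B f -> sat e f -> sat e' f.
Proof.
have agree_upd n x (B' : nat -> Prop) (d d' : nat -> option M) :
    (forall m, B' m -> d m = d' m) ->
    forall m, m = n \/ B' m -> upd d n x m = upd d' n x m.
  by move=> dd' m; rewrite /upd; case: Nat.eqb_spec => [//|ne [/ne|/dd']].
elim: f B e e' => [a b|a b|i v|i v|J g IH|J g IH|n g IH|n g IH] B e e' ee' /=.
- by case=> Ba Bb [x [y [ea [eb xy]]]]; exists x, y; rewrite -!ee'.
- by case=> Ba Bb [x [y [ea [eb xy]]]]; exists x, y; rewrite -!ee'.
- by move=> Bv [xs [exs r]]; exists xs; split=> // k; rewrite -ee'.
- by move=> Bv [xs [exs r]]; exists xs; split=> // k; rewrite -ee'.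
- by move=> Bg sg j; apply: IH (Bg j) (sg j).
- by move=> Bg [j sg]; exists j; apply: IH (Bg j) sg.
- by move=> Bg sg x; apply: IH Bg (sg x); apply: agree_upd.
- by move=> Bg [x sg]; exists x; apply: IH Bg sg; apply: agree_upd.
Qed.

Lemma upd_omap M N (F : M -> N) (e : nat -> option M) n x :
  (fun m => omap F (upd e n x m)) = upd (fun m => omap F (e m)) n (F x).
Proof. by apply: functional_extensionality => m; rewrite /upd; case: Nat.eqb. Qed.

Lemma sat_condensation M N (F : M -> N) f (e : nat -> option M) :
  condensation F -> isP f -> sat e f -> sat (fun m => omap F (e m)) f.
Proof.
case=> [[G [GK FK]] relF].
elim: f e => [a b|a b|i v|i v|J g IH|J g IH|n g IH|n g IH] e //= Pf.
- by case=> x [y [-> [-> ->]]]; exists (F y), (F y).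
- case=> x [y [-> [-> xy]]]; exists (F x), (F y); do 2!split=> //.
  by move=> Fxy; apply: xy; rewrite -(GK x) Fxy GK.
- case=> xs [exs r]; exists (fun k => F (xs k)).
  by split=> [k|]; [rewrite exs | apply: relF].
- by move=> sg j; apply: IH.
- by case=> j sg; exists j; apply: IH.
- by move=> sg y; rewrite -(FK y) -upd_omap; apply: IH.
- by case=> x sg; exists (F x); rewrite -upd_omap; apply: IH.
Qed.

Lemma P_theory_le_condensation M N (F : M -> N) :
  condensation F -> P_theory_le M N.
Proof. by move=> condF f _ Pf; apply: sat_condensation condF Pf. Qed.

Definition complement M : structure ar :=
  @Structure I ar M (fun i xs => ~ Defs.rel M i xs).

Fixpoint dual f : form ar :=
  match f with
  | FEq a b => FEq ar a b
  | FNeq a b => FNeq ar a b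
  | FRel _ v => FNRel v
  | FNRel _ v => FRel v
  | FConj _ g => FConj (fun j => dual (g j))
  | FDisj _ g => FDisj (fun j => dual (g j))
  | FAll n g => FAll n (dual g)
  | FEx n g => FEx n (dual g)
  end.

Lemma dualK : involutive dual.
Proof.
elim=> [a b|a b|i v|i v|J g IH|J g IH|n g IH|n g IH] //=; last 2 first.
- by rewrite IH.
- by rewrite IH.
- by congr FConj; apply: functional_extensionality.
- by congr FDisj; apply: functional_extensionality.
Qed.

Lemma isP_dual f : isN f -> isP (dual f).
Proof.
by elim: f => [a b|a b|i v|i v|J g IH|J g IH|n g IH|n g IH] //= Ng;
  try move=> j; apply: IH.
Qed.

Lemma isN_dual f : isP f -> isN (dual f).
Proof.
by elim: f => [a b|a b|i v|i v|J g IH|J g IH|n g IH|n g IH] //= Pg;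
  try move=> j; apply: IH.
Qed.

Lemma closed_in_dual f (B : nat -> Prop) : closed_in B f -> closed_in B (dual f).
Proof.
by elim: f B => [a b|a b|i v|i v|J g IH|J g IH|n g IH|n g IH] //= B Bg;
  try move=> j; apply: IH.
Qed.

Lemma sat_complement_dual M f (e : nat -> option M) :
  @sat I ar (complement M) e (dual f) <-> sat e f.
Proof.
elim: f e => [a b|a b|i v|i v|J g IH|J g IH|n g IH|n g IH] e /=; try tauto.
- split=> -[xs [exs r]]; exists xs; split=> //; exact: NNPP.
- by split=> sg j; apply/IH.
- by split=> -[j sg]; exists j; apply/IH.
- by split=> sg x; apply/IH.
- by split=> -[x sg]; exists x; apply/IH.
Qed.

Lemma N_theory_le_complement X Y :
  N_theory_le X Y <-> P_theory_le (complement X) (complement Y).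
Proof.
split=> XY f sf.
- move=> Pf; rewrite /models -(dualK f) !sat_complement_dual.
  by apply: XY; [exact: closed_in_dual|exact: isN_dual].
- move=> Nf /(sat_complement_dual (M := X)) Xf; apply/(sat_complement_dual (M := Y)).
  by apply: XY; [exact: closed_in_dual|exact: isP_dual|].
Qed.

Lemma condensation_complement M N (F : M -> N) (G : N -> M) :
  cancel F G -> cancel G F ->
  condensation F <-> @condensation I ar (complement N) (complement M) G.
Proof.
move=> FK GK; split=> -[_ relC]; (split; first by [exists F|exists G]).
- move=> i ys /= nys rGys; apply: nys.
  by have := relC i _ rGys; congr Defs.rel; apply: functional_extensionality.
- move=> i xs rxs; apply: NNPP => nFxs; apply: (relC i _ nFxs).
  by congr Defs.rel: rxs; apply: functional_extensionality.
Qed.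

Lemma N_theory_le_condensation M N (F : M -> N) :
  condensation F -> N_theory_le N M.
Proof.
move=> condF; have [G [FK GK]] := condF.1.
apply/N_theory_le_complement.
apply: (@P_theory_le_condensation (complement N) (complement M) G).
exact: (condensation_complement FK GK).1 condF.
Qed.

Lemma closed_in_ltS f n :
  closed_in (fun m => m < n.+1) f -> closed_in (fun m => m = n \/ m < n) f.
Proof.
by apply: closed_in_monotone => m; rewrite ltnS leq_eqVlt => /orP[/eqP|]; [left|right].
Qed.

Section BackAndForth.
Variables X Y : structure ar.
Hypothesis XY : P_theory_le X Y.

Definition P_le n (eX : nat -> option X) (eY : nat -> option Y) :=
  forall f, isP f -> closed_in (fun m => m < n) f -> sat eX f -> sat eY f.

Lemma P_le0 : P_le 0 (fun _ => None) (fun _ => None).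
Proof.
move=> f Pf cf; apply: XY Pf.
by apply: closed_in_monotone cf => m; rewrite ltn0.
Qed.

Lemma not_P_le_witness n eX eY : ~ P_le n eX eY ->
  {f | isP f /\ closed_in (fun m => m < n) f /\ sat eX f /\ ~ sat eY f}.
Proof.
move=> nle; apply: constructive_indefinite_description.
apply: NNPP => nex; apply: nle => f Pf cf sX; apply: NNPP => nsY.
by apply: nex; exists f.
Qed.

Lemma P_le_forth n eX eY : P_le n eX eY ->
  forall x, exists y, P_le n.+1 (upd eX n x) (upd eY n y).
Proof.
move=> le_n x; apply: NNPP => no_y.
pose wit (y : Y) :=
  @not_P_le_witness n.+1 _ (upd eY n y) (fun le_y => no_y (ex_intro _ y le_y)).
have [|||y sy] := le_n (FEx n (FConj (fun y => sval (wit y)))).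
- by move=> y; case: (svalP (wit y)).
- by move=> y; case: (svalP (wit y)) => _ [/closed_in_ltS].
- by exists x => y; case: (svalP (wit y)) => _ [_ []].
- by case: (svalP (wit y)) => _ [_ [_]]; apply; apply: sy.
Qed.

Lemma P_le_back n eX eY : P_le n eX eY ->
  forall y, exists x, P_le n.+1 (upd eX n x) (upd eY n y).
Proof.
move=> le_n y; apply: NNPP => no_x.
pose wit (x : X) :=
  @not_P_le_witness n.+1 (upd eX n x) _ (fun le_x => no_x (ex_intro _ x le_x)).
have [|||x sx] := le_n (FAll n (FDisj (fun x => sval (wit x)))) _ _ _ y.
- by move=> x; case: (svalP (wit x)).
- by move=> x; case: (svalP (wit x)) => _ [/closed_in_ltS].
- by move=> x; exists x; case: (svalP (wit x)) => _ [_ []].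
- by case: (svalP (wit x)) => _ [_ [_]]; apply.
Qed.

Variables (codeX : X -> nat) (codeY : Y -> nat) (x0 : X) (y0 : Y).
Hypotheses (codeX_inj : injective codeX) (codeY_inj : injective codeY).

Definition decodeX j := epsilon (inhabits x0) (fun x => codeX x = j).
Definition decodeY j := epsilon (inhabits y0) (fun y => codeY y = j).

Lemma codeXK : cancel codeX decodeX.
Proof.
move=> x; apply: codeX_inj.
by apply: (epsilon_spec (inhabits x0) (fun z => codeX z = codeX x)); exists x.
Qed.

Lemma codeYK : cancel codeY decodeY.
Proof.
move=> y; apply: codeY_inj.
by apply: (epsilon_spec (inhabits y0) (fun z => codeY z = codeY y)); exists y.
Qed.

Definition approx n :=
  {e : (nat -> option X) * (nat -> option Y) | P_le n e.1 e.2}.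

Definition extend n (e : approx n) :
    {xy : X * Y | P_le n.+1 (upd (sval e).1 n xy.1) (upd (sval e).2 n xy.2)} :=
  if odd n then
    let x := constructive_indefinite_description _
      (P_le_back (svalP e) (decodeY n./2)) in
    exist _ (sval x, decodeY n./2) (svalP x)
  else
    let y := constructive_indefinite_description _
      (P_le_forth (svalP e) (decodeX n./2)) in
    exist _ (decodeX n./2, sval y) (svalP y).

Fixpoint approx_seq n : approx n :=
  match n return approx n with
  | 0 => exist _ (fun _ => None, fun _ => None) P_le0
  | k.+1 => let e := approx_seq k in let xy := extend e in
      exist _ (upd (sval e).1 k (sval xy).1, upd (sval e).2 k (sval xy).2) (svalP xy)
  end.

Definition xseq n := (sval (extend (approx_seq n))).1.
Definition yseq n := (sval (extend (approx_seq n))).2.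

Lemma approx_seqE n m : m < n ->
  (sval (approx_seq n)).1 m = Some (xseq m) /\ (sval (approx_seq n)).2 m = Some (yseq m).
Proof.
elim: n => [//|n IH] lt_mn; rewrite /= /upd.
case: Nat.eqb_spec => [-> //|/eqP ne]; apply: IH.
by rewrite ltn_neqAle ne -ltnS.
Qed.

Lemma P_le_seq n : P_le n (fun m => Some (xseq m)) (fun m => Some (yseq m)).
Proof.
move=> f Pf cf sX.
have agX m : m < n -> Some (xseq m) = (sval (approx_seq n)).1 m.
  by case/approx_seqE.
have agY m : m < n -> (sval (approx_seq n)).2 m = Some (yseq m).
  by case/approx_seqE.
apply: (sat_agree agY cf); apply: (svalP (approx_seq n) _ Pf cf).
exact: sat_agree agX cf sX.
Qed.

Lemma xseq_eq m m' : xseq m = xseq m' <-> yseq m = yseq m'.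
Proof.
have le := @P_le_seq (maxn m m').+1.
have cl : m < (maxn m m').+1 /\ m' < (maxn m m').+1 by rewrite !ltnS leq_maxl leq_maxr.
split=> [eqX|eqY].
- case: (le (FEq ar m m') Logic.I cl); first by exists (xseq m), (xseq m').
  by move=> y [y' [[->] [[->]]]].
- apply: NNPP => neqX; case: (le (FNeq ar m m') Logic.I cl).
    by exists (xseq m), (xseq m').
  by move=> y [y' [[<-] [[<-]]]].
Qed.

Lemma rel_xseq i (ms : 'I_(ar i) -> nat) :
  Defs.rel X i (fun k => xseq (ms k)) -> Defs.rel Y i (fun k => yseq (ms k)).
Proof.
move=> rX.
have cl k : ms k < (\max_(k < ar i) ms k).+1 by rewrite ltnS; exact: leq_bigmax.
case: (@P_le_seq _ (FRel ms) Logic.I cl); first by exists (fun k => xseq (ms k)).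
move=> ys [eys rY]; congr Defs.rel: rY.
by apply: functional_extensionality => k; case: (eys k).
Qed.

Lemma xseq_code x : xseq (codeX x).*2 = x.
Proof. by rewrite /xseq /extend odd_double /= half_double codeXK. Qed.

Lemma yseq_code y : yseq (codeY y).*2.+1 = y.
Proof. by rewrite /yseq /extend /= odd_double /= uphalf_double codeYK. Qed.

Lemma condensation_seq : condensation (fun x => yseq (codeX x).*2).
Proof.
split.
- exists (fun y => xseq (codeY y).*2.+1); split=> [x|y].
  + by rewrite -[RHS]xseq_code; apply/xseq_eq; rewrite yseq_code.
  + by rewrite -[RHS]yseq_code; apply/xseq_eq; rewrite xseq_code.
- move=> i xs rX; apply: (@rel_xseq i (fun k => (codeX (xs k)).*2)).
  by congr Defs.rel: rX; apply: functional_extensionality => k; rewrite xseq_code.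
Qed.

End BackAndForth.

Lemma inhabited_P_theory_le X Y : P_theory_le X Y -> inhabited X <-> inhabited Y.
Proof.
move=> XY; split=> [[x]|[y]].
- have [||y _] := XY (FEx 0 (FEq ar 0 0)) _ Logic.I.
  + by split; left.
  + by exists x, x, x.
  + by exists.
- apply: NNPP => nX.
  have [|||[]] := XY (FAll 0 (FDisj (fun e : False => match e with end))) _ _ _ y.
  + by case.
  + by case.
  + by move=> x; case: nX.
Qed.

Lemma condensation_empty X Y : P_theory_le X Y ->
  ~ inhabited X -> ~ inhabited Y -> exists F : X -> Y, condensation F.
Proof.
move=> XY nX nY.
exists (fun x => False_rect _ (nX (inhabits x))); split.
  exists (fun y => False_rect _ (nY (inhabits y))).
  by split=> [x|y]; [case: nX | case: nY]; exists.
(* Only nullary relations can hold in an empty structure. *)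
move=> i xs rX.
have xs_void (k : 'I_(ar i)) : False by apply: nX; exact: inhabits (xs k).
have [|||ys [_ rY]] := XY (FRel (fun _ : 'I_(ar i) => 0)).
- by move=> k; case: (xs_void k).
- by [].
- by exists xs; split=> // k; case: (xs_void k).
- by congr Defs.rel: rY; apply: functional_extensionality => k; case: (xs_void k).
Qed.

Lemma condensation_of_P_theory_le X Y : countable X -> countable Y ->
  P_theory_le X Y -> exists F : X -> Y, condensation F.
Proof.
move=> [codeX codeX_inj] [codeY codeY_inj] XY.
have X_Y := inhabited_P_theory_le XY.
case: (classic (inhabited X)) => [[x0]|nX]; last first.
  by apply: condensation_empty; rewrite -?X_Y.
have [y0] := X_Y.1 (inhabits x0).
by eexists; apply: (condensation_seq XY x0 y0 codeX_inj codeY_inj).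
Qed.

Lemma condensation_of_N_theory_le X Y : countable X -> countable Y ->
  N_theory_le X Y -> exists G : Y -> X, condensation G.
Proof.
move=> cX cY /N_theory_le_complement XY.
have [F condF] := @condensation_of_P_theory_le (complement X) (complement Y) cX cY XY.
have [G [FK GK]] := condF.1.
by exists G; apply: (@condensation_complement Y X G F GK FK).2.
Qed.

Lemma countable_condensation X Y (F : Y -> X) :
  condensation F -> countable X -> countable Y.
Proof.
case=> -[G [FK _]] _ [code code_inj].
by exists (fun y => code (F y)) => y y' /code_inj/(can_inj FK).
Qed.

Lemma cond_equivC X Y : cond_equiv X Y -> cond_equiv Y X.
Proof. by case. Qed.

Lemma P_equiv_cond_equiv X Y : countable X -> countable Y ->
  P_equiv X Y <-> cond_equiv X Y.
Proof.
move=> cX cY; split=> [XY|[[F condF] [G condG]] f sf Pf].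
  by split; apply: condensation_of_P_theory_le => // f sf Pf /(XY f sf Pf).
split; [exact: (P_theory_le_condensation condF) |
         exact: (P_theory_le_condensation condG)].
Qed.

Lemma models_PN_theory_P_equiv X Y : countable X -> countable Y ->
  models_PN_theory_of X Y <-> P_equiv X Y.
Proof.
move=> cX cY.
split=> [XY | /(P_equiv_cond_equiv cX cY) [[F condF] [G condG]] f sf [Pf|Nf]].
- have [G condG] : exists G : Y -> X, condensation G.
    by apply: condensation_of_N_theory_le => // f sf Nf; apply: XY => //; right.
  move=> f sf Pf; split; first by apply: XY => //; left.
  exact: (P_theory_le_condensation condG).
- exact: (P_theory_le_condensation condF).
- exact: (N_theory_le_condensation condG).
Qed.

End WeakReversibility.

Theorem theorem4p3 (I : Type) (ar : I -> nat) (X : structure ar)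
  (hX : countable X) :
  (weakly_reversible X <->
     (forall Y : structure ar, countable Y -> P_equiv X Y -> isomorphic Y X))
  /\
  ((forall Y : structure ar, countable Y -> P_equiv X Y -> isomorphic Y X) <->
     (forall Y : structure ar, countable Y -> models_PN_theory_of X Y ->
        isomorphic Y X)).
Proof.
split; split.
- move=> WR Y cY /(P_equiv_cond_equiv hX cY) XY.
  exact/WR/cond_equivC.
- move=> P_iso Y YX; have [[F condF] _] := YX.
  have cY := countable_condensation condF hX.
  by apply: (P_iso Y cY); apply/(P_equiv_cond_equiv hX cY)/cond_equivC.
- by move=> P_iso Y cY /(models_PN_theory_P_equiv hX cY); apply: P_iso.
- by move=> PN_iso Y cY /(models_PN_theory_P_equiv hX cY); apply: PN_iso.
Qed.
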